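(* Let $\mathcal{F}=(W,\preceq,\mathcal{V})$ be a finite poset model and $w_1,w_2\in W$. Then $w_1\equiv_\eta w_2$ if and only if $w_1\approx_\pm w_2$.
   Context: Fix a set PL of proposition letters. A poset model is $\mathcal{F}=(W,\preceq,\mathcal{V})$ with $(W,\preceq)$ a partial order and $\mathcal{V}:\mathrm{PL}\to\mathcal{P}(W)$. $[m;n]=\{i\in\mathbb{N}:m\le i\le n\}$, $[m;n)=\{i:m\le i<n\}$. An undirected path of length $\ell$ from $w$ is $\pi:[0;\ell]\to W$ with $\pi(0)=w$ and, for each $i\in[0;\ell)$, $\pi(i)\preceq\pi(i+1)$ or $\pi(i+1)\preceq\pi(i)$. A $\downarrow$-path is an undirected path of length $\ell\ge1$ with $\pi(\ell)\preceq\pi(\ell-1)$. A $\pm$-path is a $\downarrow$-path of length $\ell\ge2$ with $\pi(0)\preceq\pi(1)$. SLCS$_\eta$ formulas: $\Phi::=p\mid\neg\Phi\mid\Phi_1\wedge\Phi_2\mid\eta(\Phi_1,\Phi_2)$; $w\models p$ iff $w\in\mathcal{V}(p)$; negation, conjunction standard; $w\models\eta(\Phi_1,\Phi_2)$ iff some $\pm$-path $\pi:[0;\ell]\to W$ from $w$ has $\pi(\ell)\models\Phi_2$ and $\pi(i)\models\Phi_1$ for all $i\in[0;\ell)$. $w_1\equiv_\eta w_2$ means $w_1,w_2$ satisfy the same SLCS$_\eta$ formulas. A weak $\pm$-bisimulation is a symmetric relation $B\subseteq W\times W$ such that whenever $B(w_1,w_2)$: (1) for every $p$, $w_1\in\mathcal{V}(p)$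 iff $w_2\in\mathcal{V}(p)$; (2) for all $u_1,d_1\in W$ with ($w_1\preceq u_1$ or $u_1\preceq w_1$) and $d_1\preceq u_1$, there is a $\pm$-path $\pi_2:[0;\ell_2]\to W$ from $w_2$ with $B(d_1,\pi_2(\ell_2))$ and, for all $j\in[0;\ell_2)$, $B(w_1,\pi_2(j))$ or $B(u_1,\pi_2(j))$. $w_1\approx_\pm w_2$ iff some weak $\pm$-bisimulation contains $(w_1,w_2)$. *)

From mathcomp Require Import all_boot.
Set Implicit Arguments. Unset Strict Implicit. Unset Printing Implicit Defensive.

(* Paths are functions pi : nat -> W together
   with a length l; only the values pi 0, ..., pi l matter. *)

Section PosetModel.
Variables (PL : Type) (W : finType) (le : rel W) (V : PL -> W -> bool).

Definition undirected_path (pi : nat -> W) (l : nat) : Prop :=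
  forall i, i < l -> le (pi i) (pi i.+1) \/ le (pi i.+1) (pi i).

Definition down_path (pi : nat -> W) (l : nat) : Prop :=
  1 <= l /\ undirected_path pi l /\ le (pi l) (pi l.-1).

Definition pm_path (pi : nat -> W) (l : nat) : Prop :=
  2 <= l /\ down_path pi l /\ le (pi 0) (pi 1).

Inductive form : Type :=
  | Fatom of PL
  | Fneg of form
  | Fand of form & form
  | Feta of form & form.

Fixpoint sat (f : form) (w : W) : Prop :=
  match f with
  | Fatom p => V p w
  | Fneg g => ~ sat g w
  | Fand g h => sat g w /\ sat h w
  | Feta g h => exists (pi : nat -> W) (l : nat),
      pi 0 = w /\ pm_path pi l /\ sat h (pi l) /\
      (forall i, i < l -> sat g (pi i))
  end.

Definition eta_equiv (w1 w2 : W) : Prop :=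
  forall f : form, sat f w1 <-> sat f w2.

Definition weak_pm_bisimulation (B : W -> W -> Prop) : Prop :=
  (forall x y, B x y -> B y x) /\
  (forall w1 w2, B w1 w2 ->
     (forall p, V p w1 = V p w2) /\
     (forall u1 d1, (le w1 u1 \/ le u1 w1) -> le d1 u1 ->
        exists (pi2 : nat -> W) (l2 : nat),
          pi2 0 = w2 /\ pm_path pi2 l2 /\ B d1 (pi2 l2) /\
          (forall j, j < l2 -> B w1 (pi2 j) \/ B u1 (pi2 j)))).

Definition weak_pm_bisimilar (w1 w2 : W) : Prop :=
  exists B, weak_pm_bisimulation B /\ B w1 w2.

End PosetModel.

From mathcomp Require Import all_boot zify.
From Stdlib Require Import Classical.

Set Implicit Arguments.
Unset Strict Implicit.
Unset Printing Implicit Defensive.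

(* Soundness: a weak ±-bisimulation lets the ±-path witnessing eta(g, h) be
   replayed edge by edge.  Every edge (pi k, pi k.+1) of a ↓-path has an
   endpoint u comparable to pi k with pi k.+1 <= u, and u satisfies g since a
   ↓-path does not end on an upward edge; clause (2) answers (pi k, u, pi k.+1)
   with a ±-path, and consecutive ±-paths concatenate into a ±-path.
   Completeness: on a finite model every ≡η-class is defined by a single
   characteristic formula, so clause (2) for ≡η is the transfer of the formula
   eta(chi_w \/ chi_u, chi_d) along w1 ≡η w2. *)

Section Paths.
Variables (W : finType) (le : rel W).
Hypothesis le_refl : reflexive le.

Lemma pm_path_via (x u d : W) : le x u \/ le u x -> le d u ->
  exists (pi : nat -> W) (l : nat), [/\ pi 0 = x, pm_path le pi l, pi l = d &
    forall i, i < l -> pi i = x \/ pi i = u].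
Proof.
rewrite /pm_path /down_path /undirected_path.
move=> [xu | ux] du.
- exists (nth d [:: x; u]), 2; split => //=.
    by do !split => //; case=> [|[|i]] //= _; [left | right].
  by case=> [|[|i]] //= _; [left | right].
- exists (nth d [:: x; x; u]), 3; split => //=.
    by do !split => //; case=> [|[|[|i]]] //= _; [left | right | right].
  by case=> [|[|[|i]]] //= _; [left | left | right].
Qed.

Lemma down_path_peak (pi : nat -> W) (l k : nat) : down_path le pi l -> k < l ->
  exists u, [/\ le (pi k) u \/ le u (pi k), le (pi k.+1) u &
                u = pi k \/ (u = pi k.+1 /\ k.+1 < l)].
Proof.
move=> [_ [und last_down]] kl.
case down: (le (pi k.+1) (pi k)).
  by exists (pi k); split; [left; apply: le_refl | | left].
have up : le (pi k) (pi k.+1) by case: (und k kl) => //; rewrite down.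
exists (pi k.+1); split; [by left | exact: le_refl | right; split => //].
rewrite ltn_neqAle kl andbT; apply/eqP => Ekl.
by move: last_down; rewrite -Ekl /= down.
Qed.

Definition path_cat (rho : nat -> W) (m : nat) (sig : nat -> W) (j : nat) : W :=
  if j <= m then rho j else sig (j - m).

Lemma path_catL rho m sig j : j <= m -> path_cat rho m sig j = rho j.
Proof. by rewrite /path_cat => ->. Qed.

Lemma path_catR rho m sig j : sig 0 = rho m -> m <= j ->
  path_cat rho m sig j = sig (j - m).
Proof.
rewrite /path_cat => sig0 mj; case: ifP => // jm.
have -> : j = m by lia.
by rewrite subnn sig0.
Qed.

Lemma pm_path_cat rho m sig l : sig 0 = rho m -> m = 0 \/ pm_path le rho m ->
  pm_path le sig l -> pm_path le (path_cat rho m sig) (m + l).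
Proof.
move=> sig0 rho_pm [l2 [[_ [sig_und sig_last]] sig_first]].
have catR j : m <= j -> path_cat rho m sig j = sig (j - m) by exact: path_catR.
split; first lia.
split; [split; first lia; split|].
- move=> i il; case: (ltnP i m) => im.
    rewrite !path_catL //; last exact: ltnW.
    by case: rho_pm => [m0 | [_ [[_ [rho_und _]] _]]]; [lia | exact: rho_und].
  rewrite !catR; try lia.
  have -> : i.+1 - m = (i - m).+1 by lia.
  by apply: sig_und; lia.
- rewrite !catR; try lia.
  have -> : m + l - m = l by lia.
  by have -> : (m + l).-1 - m = l.-1 by lia.
- case: rho_pm => [m0 | [m2 [_ rho_first]]].
    by subst m; rewrite !catR // !subn0 -sig0.
  by rewrite !path_catL // ltnW.
Qed.

End Paths.

Section Soundness.
Variables (PL : Type) (W : finType) (le : rel W) (V : PL -> W -> bool).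
Hypothesis le_refl : reflexive le.
Variable B : W -> W -> Prop.
Hypothesis B_bisim : weak_pm_bisimulation le V B.

Lemma bisim_follow_path (P : W -> Prop) (pi : nat -> W) (l : nat) (y : W) :
  (forall x z, B x z -> P x -> P z) -> down_path le pi l ->
  (forall i, i < l -> P (pi i)) -> B (pi 0) y ->
  forall k, k <= l -> exists (rho : nat -> W) (m : nat),
    [/\ rho 0 = y, (k = 0 /\ m = 0) \/ pm_path le rho m, B (pi k) (rho m) &
        forall j, j < m -> P (rho j)].
Proof.
move=> P_inv pi_down P_pi B0 k.
elim: k => [|k IHk] kl; first by exists (fun => y), 0; split; [| left | |].
have [rho [m [rho0 rho_pm B_rho P_rho]]] := IHk (ltnW kl).
have [u [ku k1u u_on]] := down_path_peak le_refl pi_down kl.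
have P_u : P u by case: u_on => [-> | [-> k1l]]; apply: P_pi; lia.
have [sig [l2 [sig0 [sig_pm [B_sig B_sig_path]]]]] :=
  (B_bisim.2 _ _ B_rho).2 u (pi k.+1) ku k1u.
exists (path_cat rho m sig), (m + l2); split.
- by rewrite path_catL.
- right; apply: pm_path_cat => //.
  by case: rho_pm => [[_ ->] | ?]; [left | right].
- by rewrite path_catR ?leq_addr // addKn.
- move=> j jml; case: (ltnP j m) => jm.
    by rewrite path_catL; [apply: P_rho | apply: ltnW].
  rewrite path_catR //; have jl2 : j - m < l2 by lia.
  by case: (B_sig_path _ jl2) => B_j; apply: P_inv B_j _; [apply: P_pi; lia |].
Qed.

Lemma sat_bisim (f : form PL) (x y : W) : B x y -> sat le V f x -> sat le V f y.
Proof.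
elim: f x y => [p | g IHg | g IHg h IHh | g IHg h IHh] x y Bxy /=.
- by rewrite (B_bisim.2 _ _ Bxy).1.
- by move=> not_gx gy; apply/not_gx/(IHg y x (B_bisim.1 _ _ Bxy)).
- by move=> [gx hx]; split; [apply: IHg Bxy gx | apply: IHh Bxy hx].
move=> [pi [l [pi0 [[l2 [pi_down _]] [h_pi g_pi]]]]].
have B0 : B (pi 0) y by rewrite pi0.
have [rho [m [rho0 [[l0 _] | rho_pm] B_rho g_rho]]] :=
  bisim_follow_path IHg pi_down g_pi B0 (leqnn l); first by lia.
by exists rho, m; do !split => //; apply: IHh B_rho h_pi.
Qed.

End Soundness.

Section Completeness.
Variables (PL : Type) (W : finType) (le : rel W) (V : PL -> W -> bool).
Hypothesis le_refl : reflexive le.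

Lemma separating_formula (w v : W) : ~ eta_equiv le V w v ->
  exists f, sat le V f w /\ ~ sat le V f v.
Proof.
move=> not_wv; apply: NNPP => no_sep; apply: not_wv => f.
split => sat_f; apply: NNPP => not_sat.
- by apply: no_sep; exists f.
- by apply: no_sep; exists (Fneg f); split => // /(_ sat_f).
Qed.

Lemma characteristic_formula (f0 : form PL) (w : W) :
  exists chi, forall v, sat le V chi v <-> eta_equiv le V w v.
Proof.
have chi_on (s : seq W) : exists chi, sat le V chi w /\
    forall v, v \in s -> sat le V chi v -> eta_equiv le V w v.
  elim: s => [|v s [chi [chi_w chi_s]]].
    by exists (Fneg (Fand f0 (Fneg f0))); split => //= -[].
  case: (classic (eta_equiv le V w v)) => [wv | /separating_formula [f [fw fv]]].
    by exists chi; split => // x; rewrite inE => /orP [/eqP -> | /chi_s].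
  exists (Fand chi f); split => // x.
  by rewrite inE => /orP [/eqP -> /= [_ /fv []] | xs /= [chi_x _]]; apply: chi_s.
have [chi [chi_w chi_W]] := chi_on (enum W).
by exists chi => v; split => [|wv]; [apply: chi_W; rewrite mem_enum | apply/wv].
Qed.

Lemma eta_equiv_pm_bisimulation : weak_pm_bisimulation le V (eta_equiv le V).
Proof.
split=> [x y xy f | x y xy]; first by split => /xy.
split=> [p | u d xu du]; first by apply/idP/idP => /(xy (Fatom p)).
case: (classic (inhabited (form PL))) => [[f0] | no_form]; last first.
  have [pi [l [pi0 pi_pm _ _]]] :=
    pm_path_via le_refl (or_introl (le_refl y)) (le_refl y).
  have trivial_equiv a b : eta_equiv le V a b.
    by move=> f; case: no_form; constructor.
  exists pi, l; split=> //; split=> //.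
  by split=> [|j _]; [| left]; apply: trivial_equiv.
have [chi_x chi_xE] := characteristic_formula f0 x.
have [chi_u chi_uE] := characteristic_formula f0 u.
have [chi_d chi_dE] := characteristic_formula f0 d.
pose near := Fneg (Fand (Fneg chi_x) (Fneg chi_u)).
have nearE v : sat le V near v <-> eta_equiv le V x v \/ eta_equiv le V u v.
  by rewrite /= chi_xE chi_uE; tauto.
have eta_x : sat le V (Feta near chi_d) x.
  have [pi [l [pi0 pi_pm pil pi_on]]] := pm_path_via le_refl xu du.
  exists pi, l; split=> //; split=> //; split=> [|i /pi_on [] ->].
  - by apply/chi_dE; rewrite pil.
  - by apply/nearE; left.
  - by apply/nearE; right.
have [pi [l [pi0 [pi_pm [d_pi near_pi]]]]] := (xy _).1 eta_x.
exists pi, l; split=> //; split=> //.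
by split=> [|j /near_pi /nearE //]; apply/chi_dE.
Qed.

End Completeness.

Theorem theorem3 (PL : Type) (W : finType) (le : rel W)
  (le_refl : reflexive le) (le_anti : antisymmetric le) (le_trans : transitive le)
  (V : PL -> W -> bool) (w1 w2 : W) :
  eta_equiv le V w1 w2 <-> weak_pm_bisimilar le V w1 w2.
Proof.
split=> [equiv12 | [B [B_bisim B12]] f].
  by exists (eta_equiv le V); split => //; apply: eta_equiv_pm_bisimulation.
by split; apply: (sat_bisim le_refl B_bisim) => //; apply: B_bisim.1.
Qed.
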